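(* Let $p$ be a prime and let $b$ be an integer with $0<b\le b^{-1}<p$. Let $G$ act on $S=\mathbb{C}[x_1,x_2]$ via $x_1\mapsto\zeta x_1$, $x_2\mapsto\zeta^b x_2$. The following are equivalent: (1) $S^G_{1,b}$ is generated by 4 invariants, i.e. $|\mathrm{inv}_{1,b}|=4$ (equivalently $\operatorname{codim}\ker\varphi_{1,b}=2$); (2) $(p-b)(p-b^{-1})=p+1$.
   Context: Here $\zeta=e^{2\pi i/p}$ and $G=\mathbb{Z}/p\mathbb{Z}=\langle\zeta\rangle$; $S^G_{1,b}$ is the invariant ring, spanned by the monomials $x_1^cx_2^d$ with $c+bd\equiv0\pmod p$. $b^{-1}$ is the unique integer $0<b^{-1}<p$ with $bb^{-1}\equiv1\pmod p$. $\mathrm{inv}_{1,b}$ denotes the minimal set of monomial generators of $S^G_{1,b}$ as a $\mathbb{C}$-algebra: the nonconstant invariant monomials that are not a product of two nonconstant invariant monomials. Writing $\mathrm{inv}_{1,b}=\{z_0,\dots,z_n\}$ in lexicographic order with $x_1>x_2$, let $R=\mathbb{C}[y_0,\dots,y_n]$ with $\deg y_i=\deg z_i$ and $\varphi_{1,b}:R\to S^G_{1,b}$ the $\mathbb{C}$-algebra map $y_i\mapsto z_i$. *)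

From mathcomp Require Import all_boot.
Set Implicit Arguments. Unset Strict Implicit. Unset Printing Implicit Defensive.

(* A monomial x1^c x2^d of S = C[x1,x2] is encoded by its exponent pair (c,d);
   the product of monomials corresponds to componentwise addition of exponents. *)
Definition monomial := (nat * nat)%type.

Definition mono_mul (m1 m2 : monomial) : monomial := (m1.1 + m2.1, m1.2 + m2.2).

(* x1^c x2^d is G-invariant for the action x1 -> zeta x1, x2 -> zeta^b x2
   iff zeta^(c + b d) = 1 iff c + b d = 0 mod p. *)
Definition invariant_mono (p b : nat) (m : monomial) : bool :=
  (m.1 + b * m.2) %% p == 0.

Definition nonconst_mono (m : monomial) : bool := 0 < m.1 + m.2.

Definition in_inv (p b : nat) (m : monomial) : Prop :=
  [/\ invariant_mono p b m, nonconst_mono m &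
      ~ exists m1 m2 : monomial,
          [/\ invariant_mono p b m1, nonconst_mono m1,
              invariant_mono p b m2, nonconst_mono m2 & m = mono_mul m1 m2]].

Definition inv_card_eq (p b n : nat) : Prop :=
  exists s : seq monomial,
    [/\ uniq s, (forall m, m \in s <-> in_inv p b m) & size s = n].

From mathcomp Require Import all_boot zify.
Set Implicit Arguments. Unset Strict Implicit. Unset Printing Implicit Defensive.

(* With a = p - b, the monomial x1^c x2^d is invariant iff c = a d (mod p).
   A quotient of invariant monomials is invariant, so inv_{1,b} consists of
   the nonconstant invariant monomials that are minimal for divisibility:
   x1^p, x2^p, and x1^(a d mod p) x2^d for the 0 < d < p at which the
   residue a d mod p reaches a new strict minimum.  For k = p - b^{-1} we have
   a k = 1 (mod p), so d = 1 and d = k are always such records, and no record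
   lies beyond k.  If a k = p + 1, then a d < p for d < k and nothing between
   1 and k is a record.  Otherwise either a = k = 1,
   or the first d with a d > p is a third record, strictly between 1 and k. *)

Definition mono_dvd (m1 m : monomial) : bool := (m1.1 <= m.1) && (m1.2 <= m.2).

Lemma invariant_mono_dvd p b (m : monomial) :
  invariant_mono p b m = (p %| m.1 + b * m.2).
Proof. by []. Qed.

Lemma invariant_mono_sub p b (m m1 : monomial) :
  invariant_mono p b m -> invariant_mono p b m1 -> mono_dvd m1 m ->
  invariant_mono p b (m.1 - m1.1, m.2 - m1.2).
Proof.
rewrite !invariant_mono_dvd /= => inv_m inv_m1 /andP[le1 le2].
have split_m : m.1 + b * m.2 = (m.1 - m1.1 + b * (m.2 - m1.2)) + (m1.1 + b * m1.2).
  by rewrite mulnBr; nia.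
by move: inv_m; rewrite split_m (dvdn_addl _ inv_m1).
Qed.

Lemma in_invP p b (m : monomial) :
  in_inv p b m <->
  [/\ invariant_mono p b m, nonconst_mono m &
      forall m1, invariant_mono p b m1 -> nonconst_mono m1 -> mono_dvd m1 m -> m1 = m].
Proof.
split=> [[inv_m ncm indec] | [inv_m ncm minm]]; split=> //.
  move=> m1 inv_m1 ncm1 dvd_m1; apply/eqP/negPn/negP=> ne_m1; apply: indec.
  exists m1, (m.1 - m1.1, m.2 - m1.2); split=> //; first exact: invariant_mono_sub.
    move: ne_m1 ncm1 dvd_m1; rewrite /nonconst_mono /mono_dvd.
    case: m {inv_m ncm} => c d; case: m1 {inv_m1} => c1 d1 /=.
    by rewrite xpair_eqE; lia.
  move: dvd_m1; rewrite /mono_dvd /mono_mul.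
  case: m {inv_m ncm ne_m1} => c d; case: m1 {inv_m1 ncm1} => c1 d1 /= le.
  by congr pair; lia.
case=> m1 [m2 [inv_m1 ncm1 _ ncm2 def_m]].
have := minm m1 inv_m1 ncm1; rewrite def_m /mono_dvd !leq_addr => /(_ isT) eq_m1.
move: ncm2 eq_m1; rewrite /nonconst_mono /mono_mul.
by case: m1 {inv_m1 ncm1 def_m} => c1 d1; case: m2 => c2 d2 /= pos []; lia.
Qed.

Definition min_record (a p d : nat) : bool :=
  all (fun e => a * d %% p < a * e %% p) (iota 1 d.-1).

Lemma min_recordP a p d :
  reflect (forall e, 0 < e < d -> a * d %% p < a * e %% p) (min_record a p d).
Proof.
apply: (iffP allP) => rec e; last by rewrite mem_iota => lt_e; apply: rec; lia.
by move=> lt_e; apply: rec; rewrite mem_iota; lia.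
Qed.

Section InvariantGenerators.

Variables p b : nat.
Hypotheses (p_prime : prime p) (b_gt0 : 0 < b) (b_ltp : b < p).

Local Notation a := (p - b).

Let p_gt0 : 0 < p := prime_gt0 p_prime.

Lemma invariant_monoE c d : invariant_mono p b (c, d) = (c %% p == a * d %% p).
Proof.
by rewrite /invariant_mono /= -(eqn_modDr (b * d)) -mulnDl subnK ?modnMr // ltnW.
Qed.

Lemma invariant_mono_x1 c : invariant_mono p b (c, 0) = (p %| c).
Proof. by rewrite invariant_mono_dvd /= muln0 addn0. Qed.

Lemma invariant_mono_x2 d : invariant_mono p b (0, d) = (p %| d).
Proof.
by rewrite invariant_mono_dvd /= add0n Euclid_dvdM // orb_idl // => /dvdn_leq; lia.
Qed.

Lemma in_inv_x1 : in_inv p b (p, 0).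
Proof.
apply/in_invP; split=> [||[c1 d1]]; first by rewrite invariant_mono_x1.
  by rewrite /nonconst_mono /= addn0.
rewrite /mono_dvd /nonconst_mono /= leqn0 => + + /andP[le_c1 /eqP d1_0].
rewrite d1_0 invariant_mono_x1 addn0 => /dvdn_leq le_pc1 /le_pc1 ?.
by congr pair; lia.
Qed.

Lemma in_inv_x2 : in_inv p b (0, p).
Proof.
apply/in_invP; split=> [||[c1 d1]]; first by rewrite invariant_mono_x2.
  by rewrite /nonconst_mono.
rewrite /mono_dvd /nonconst_mono /= leqn0 => + + /andP[/eqP c1_0 le_d1].
rewrite c1_0 invariant_mono_x2 add0n => /dvdn_leq le_pd1 /le_pd1 ?.
by congr pair; lia.
Qed.

Lemma in_inv_record d : 0 < d < p -> min_record a p d -> in_inv p b (a * d %% p, d).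
Proof.
move=> d_bnd /min_recordP rec; apply/in_invP; split=> [||[c1 d1]].
- by rewrite invariant_monoE modn_mod.
- by rewrite /nonconst_mono /=; lia.
rewrite /mono_dvd /nonconst_mono /= => inv_m1 ncm1 /andP[le_c1 le_d1].
have lt_c1p : c1 < p := leq_ltn_trans le_c1 (ltn_pmod _ p_gt0).
have d1_gt0 : 0 < d1.
  rewrite lt0n; apply: contraTneq inv_m1 => d1_0.
  by rewrite d1_0 invariant_mono_x1; apply/negP => /dvdn_leq; lia.
have d1_eq : d1 = d.
  apply/eqP; rewrite eqn_leq le_d1 leqNgt; apply/negP => lt_d1d.
  have := rec d1; rewrite d1_gt0 lt_d1d => /(_ isT).
  by move: inv_m1; rewrite invariant_monoE => /eqP <-; rewrite (modn_small lt_c1p); lia.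
by move: inv_m1; rewrite d1_eq invariant_monoE (modn_small lt_c1p) => /eqP ->.
Qed.

Definition inv_seq : seq monomial :=
  [:: (p, 0), (0, p) & [seq (a * d %% p, d) | d <- iota 1 p.-1 & min_record a p d]].

Lemma in_inv_mem_inv_seq m : in_inv p b m -> m \in inv_seq.
Proof.
case: m => c d /in_invP[inv_m ncm minm]; rewrite !in_cons.
have [d_0 | d_gt0] := posnP d.
  subst d; move: inv_m ncm; rewrite invariant_mono_x1 /nonconst_mono addn0.
  move=> /dvdn_leq le_pc /le_pc {}le_pc.
  rewrite -(minm (p, 0)) ?eqxx ?invariant_mono_x1 //.
    by rewrite /nonconst_mono addn0.
  by rewrite /mono_dvd /= le_pc.
have [le_pd | lt_dp] := leqP p d.
  by rewrite -(minm (0, p)) ?eqxx ?orbT ?invariant_mono_x2 // /mono_dvd /= le_pd.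
have inv_r : invariant_mono p b (a * d %% p, d) by rewrite invariant_monoE modn_mod.
have le_rc : a * d %% p <= c.
  by move: inv_m; rewrite invariant_monoE => /eqP <-; exact: leq_mod.
have rec : min_record a p d.
  apply/min_recordP => e /andP[e_gt0 lt_ed]; rewrite ltnNge; apply/negP => le_e.
  have := minm (a * e %% p, e).
  rewrite invariant_monoE modn_mod /nonconst_mono /mono_dvd /= eqxx addn_gt0 e_gt0.
  rewrite orbT (leq_trans le_e le_rc) (ltnW lt_ed).
  by move=> /(_ isT isT isT) [_]; lia.
apply/orP; right; apply/orP; right; apply/mapP; exists d.
  by rewrite mem_filter rec mem_iota; lia.
rewrite (minm _ inv_r) //; first by rewrite /nonconst_mono addn_gt0 d_gt0 orbT.
by rewrite /mono_dvd /= le_rc leqnn.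
Qed.

Lemma mem_inv_seq m : m \in inv_seq <-> in_inv p b m.
Proof.
split=> [|/in_inv_mem_inv_seq //].
rewrite !in_cons => /orP[/eqP-> | /orP[/eqP-> | /mapP[d]]].
- exact: in_inv_x1.
- exact: in_inv_x2.
rewrite mem_filter mem_iota => /andP[rec d_bnd] ->.
by apply: in_inv_record rec; lia.
Qed.

Lemma uniq_inv_seq : uniq inv_seq.
Proof.
have inj_f : injective (fun d => (a * d %% p, d)) by move=> d e [].
rewrite /= in_cons negb_or xpair_eqE eqn0Ngt p_gt0.
rewrite map_inj_uniq // filter_uniq ?iota_uniq //.
by rewrite !andbT; apply/andP; split; apply/mapP => -[d];
  rewrite mem_filter mem_iota => /andP[_ ?] [? ?]; lia.
Qed.

Lemma inv_card_eqE n :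
  inv_card_eq p b n <-> n = (count (min_record a p) (iota 1 p.-1)).+2.
Proof.
have size_inv_seq : size inv_seq = (count (min_record a p) (iota 1 p.-1)).+2.
  by rewrite /= size_map size_filter.
split=> [[s [uniq_s mem_s <-]] | ->].
  rewrite -size_inv_seq; apply/perm_size/uniq_perm => // [|m].
    exact: uniq_inv_seq.
  by apply/idP/idP => [/mem_s/mem_inv_seq | /mem_inv_seq/mem_s].
by exists inv_seq; split=> //; [exact: uniq_inv_seq | exact: mem_inv_seq].
Qed.

End InvariantGenerators.

Lemma mul_compl_mod p b c : b <= p -> c <= p -> (p - b) * (p - c) = b * c %[mod p].
Proof.
move=> le_bp le_cp.
have expand : (b + c) * p + (p - b) * (p - c) = p * p + b * c.
  rewrite mulnBl !mulnBr mulnDl; nia.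
by rewrite -(modnMDl (b + c)) expand modnMDl.
Qed.

Section ResidueRecords.

Variables p a k : nat.
Hypotheses (p_prime : prime p) (a_gt0 : 0 < a) (a_ltp : a < p).
Hypotheses (k_gt0 : 0 < k) (k_ltp : k < p) (ak_mod : a * k %% p = 1).

Let p_gt0 : 0 < p := prime_gt0 p_prime.

Local Notation records := [seq d <- iota 1 p.-1 | min_record a p d].

Lemma mem_records d : (d \in records) = (0 < d < p) && min_record a p d.
Proof. by rewrite mem_filter mem_iota add1n prednK // andbC. Qed.

Lemma mul_mod_gt0 e : 0 < e < p -> 0 < a * e %% p.
Proof.
move=> e_bnd; rewrite lt0n -/(dvdn p (a * e)) Euclid_dvdM // negb_or.
by apply/andP; split; apply/negP => /dvdn_leq; lia.
Qed.

Lemma mul_mod_eq1 e : 0 < e < p -> a * e %% p = 1 -> e = k.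
Proof.
move=> e_bnd ae_mod; rewrite -(modn_small k_ltp) -(modn_small (_ : e < p)); last by lia.
by rewrite -[e]muln1 -ak_mod modnMmr mulnA [e * a]mulnC mulnC -modnMmr ae_mod muln1.
Qed.

Lemma min_record_inv : min_record a p k.
Proof.
apply/min_recordP => e e_bnd; have e_bnd' : 0 < e < p by lia.
rewrite ak_mod ltn_neqAle mul_mod_gt0 // andbT eq_sym.
by apply/eqP => /(mul_mod_eq1 e_bnd'); lia.
Qed.

Lemma min_record_le_inv d : d < p -> min_record a p d -> d <= k.
Proof.
move=> d_ltp /min_recordP rec; rewrite leqNgt; apply/negP => lt_kd.
have := rec k; rewrite k_gt0 lt_kd ak_mod => /(_ isT).
have d_bnd : 0 < d < p by lia.
by have := mul_mod_gt0 d_bnd; lia.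
Qed.

Lemma min_record_before_wrap d : 1 < d -> a * d < p -> ~~ min_record a p d.
Proof.
move=> d_gt1 ad_ltp; apply/min_recordP => /(_ 1); rewrite d_gt1 => /(_ isT).
by rewrite muln1 !modn_small // ltnNge leq_pmulr //; lia.
Qed.

Lemma first_wrap_mod : 1 < a -> a * (p %/ a).+1 %% p = a * (p %/ a).+1 - p.
Proof.
move=> a_gt1; have p_eq := divn_eq p a; have lt_mod := ltn_pmod p a_gt0.
have le_p : p <= a * (p %/ a).+1 by rewrite mulnS mulnC; lia.
by rewrite -[X in X %% p](subnK le_p) modnDr modn_small // mulnS mulnC; lia.
Qed.

Lemma first_wrap_record : 1 < a -> min_record a p (p %/ a).+1.
Proof.
move=> a_gt1; have p_eq := divn_eq p a.
have p_mod_gt0 : 0 < p %% a.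
  rewrite lt0n -/(dvdn a p); apply/negP.
  by move=> /(prime_nt_dvdP p_prime (negbT (gtn_eqF a_gt1))); lia.
apply/min_recordP => e /andP[e_gt0 e_le]; rewrite ltnS in e_le.
have le_ae : a * e <= p.
  by rewrite (leq_trans (leq_mul (leqnn a) e_le)) // mulnC leq_divM.
have e_ltp : e < p := leq_ltn_trans e_le (ltn_Pdiv a_gt1 p_gt0).
have ae_ltp : a * e < p.
  rewrite ltn_neqAle le_ae andbT; apply/eqP => ae_p.
  have e_bnd : 0 < e < p by lia.
  by have := mul_mod_gt0 e_bnd; rewrite ae_p modnn.
rewrite first_wrap_mod // (modn_small ae_ltp) mulnS.
by have := leq_pmulr a e_gt0; rewrite mulnC in p_eq; lia.
Qed.

Lemma first_wrap_le_inv : 1 < a -> (p %/ a).+1 <= k.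
Proof.
move=> a_gt1; rewrite -(ltn_pmul2l a_gt0) (leq_ltn_trans (_ : _ <= p)) //.
  by rewrite mulnC leq_divM.
have := divn_eq (a * k) p; rewrite ak_mod.
case: (a * k %/ p) => [|q] ak_eq; last by rewrite ak_eq mulSn; lia.
by move/eqP: ak_eq; rewrite mul0n add0n muln_eq1; lia.
Qed.

Lemma mem_records_wrap : a * k = p + 1 -> records =i [:: 1; k].
Proof.
move=> ak_eq d; have a_gt1 : 1 < a by move: ak_eq; case: a a_gt0 => [|[|]] //; lia.
rewrite !inE; apply/idP/idP => [|/orP[] /eqP ->]; last 2 first.
- by rewrite mem_records prime_gt1.
- by rewrite mem_records min_record_inv k_gt0 k_ltp.
rewrite mem_records => /andP[/andP[d_gt0 d_ltp] rec].
have le_dk := min_record_le_inv d_ltp rec.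
have [-> //|ne_d1] := eqVneq d 1.
have [// | ne_dk] := eqVneq d k.
have d_gt1 : 1 < d by lia.
have lt_dk : d < k by lia.
have := leq_mul (leqnn a) lt_dk; rewrite mulnS => le_ak.
have ad_ltp : a * d < p by lia.
by rewrite (negbTE (min_record_before_wrap d_gt1 ad_ltp)) in rec.
Qed.

Lemma count_min_record_eq2 :
  count (min_record a p) (iota 1 p.-1) = 2 <-> a * k = p + 1.
Proof.
rewrite -size_filter.
have uniq_records : uniq records by rewrite filter_uniq ?iota_uniq.
split=> [size2 | ak_eq]; last first.
  rewrite (perm_size (uniq_perm uniq_records _ (mem_records_wrap ak_eq))) //= inE andbT.
  by apply/eqP => k_1; move: ak_eq; rewrite -k_1 muln1; lia.
have k_gt1 : 1 < k.
  rewrite ltnNge; apply/negP => k_le1.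
  suff : size records <= size [:: 1] by rewrite size2.
  apply: uniq_leq_size => // d.
  rewrite mem_records inE => /andP[/andP[d_gt0 d_ltp] rec].
  by have := min_record_le_inv d_ltp rec; lia.
have a_gt1 : 1 < a.
  rewrite ltn_neqAle a_gt0 andbT eq_sym; apply/eqP => a_1.
  by move: ak_mod; rewrite a_1 mul1n modn_small //; lia.
have K_eq : (p %/ a).+1 = k.
  apply/eqP/negPn/negP => ne_K; suff : size [:: 1; (p %/ a).+1; k] <= size records.
    by rewrite size2.
  have K_gt1 : 1 < (p %/ a).+1 by rewrite ltnS divn_gt0 // ltnW.
  apply: uniq_leq_size => [|d].
    by rewrite /= !inE (ltn_eqF K_gt1) (ltn_eqF k_gt1) (negbTE ne_K).
  rewrite !inE mem_records => /or3P[] /eqP ->.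
  - by rewrite prime_gt1.
  - by rewrite first_wrap_record // andbT (leq_ltn_trans (first_wrap_le_inv a_gt1) k_ltp).
  by rewrite min_record_inv k_gt0 k_ltp.
by move: ak_mod; rewrite -K_eq first_wrap_mod //; lia.
Qed.

End ResidueRecords.

Theorem theorem3p5 (p b binv : nat) :
  prime p ->
  0 < binv < p -> (b * binv) %% p = 1 %% p ->
  0 < b <= binv ->
  (inv_card_eq p b 4 <-> (p - b) * (p - binv) = p + 1).
Proof.
move=> p_prime /andP[binv_gt0 binv_ltp] b_binv /andP[b_gt0 le_b_binv].
have b_ltp : b < p := leq_ltn_trans le_b_binv binv_ltp.
have compl_mod : (p - b) * (p - binv) %% p = 1.
  by rewrite mul_compl_mod ?b_binv ?modn_small ?prime_gt1 // ltnW.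
have a_bnd : 0 < p - b < p by lia.
have k_bnd : 0 < p - binv < p by lia.
case/andP: a_bnd => a_gt0 a_ltp; case/andP: k_bnd => k_gt0 k_ltp.
rewrite inv_card_eqE //.
rewrite -(count_min_record_eq2 p_prime a_gt0 a_ltp k_gt0 k_ltp compl_mod).
by split=> [[]|->].
Qed.
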